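(* Let $FAF=\langle\mathcal A,\rho\rangle$ be a fuzzy argumentation framework and $E\subseteq\mathcal A$. For every $C\subseteq\mathcal A$: $E\in\mathcal{PE}(FAF,C)$ if and only if for every $S\in SCCS_{FAF}$, $$E\cap S\in\mathcal{PE}\big(FAF\downarrow_{R_{FAF}(S,E)},\,D_{FAF}(S,E)\cap C\big).$$
   Context: Fuzzy sets: a fuzzy set on a crisp set $X$ is a map $S:X\to[0,1]$; $S\subseteq S'$ means $S(x)\le S'(x)$ for all $x$; $\cap,\cup$ are pointwise $\min,\max$; $\mathrm{Supp}(S)=\{x:S(x)>0\}$. A fuzzy point $(x,a)$, $a\in(0,1]$, has value $a$ at $x$ and $0$ elsewhere; $(x,a)\in S$ means $a\le S(x)$. $a*b=\min\{a,b\}$. A fuzzy argumentation framework (FAF) is $\langle\mathcal A,\rho\rangle$ with $\mathrm{Args}$ a crisp set, $\mathcal A$ a fuzzy set on $\mathrm{Args}$, $\rho:\mathrm{Args}\times\mathrm{Args}\to[0,1]$, $\rho_{AB}=\rho(A,B)$; $A$ attacks $B$ iff $\rho_{AB}>0$. Fuzzy arguments are fuzzy points $(A,a)\in\mathcal A$. An attack of $(A,a)$ on $(B,b)$ is tolerable if $\min\{a,\rho_{AB}\}+b\le1$, sufficient otherwise. $(A,a)$ weakens $(B,b)$ to $(B,b')$, $b'=\min\{1-\min\{a,\rho_{AB}\},b\}$. $T\subseteq\mathcal A$ weakening defends $(C,c)$ if for every fuzzy argument $(B,b)$ sufficiently attacking $(C,c)$ there is $(A',a')\in T$ weakening $(B,b)$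 to some $(B,b')$ which tolerably attacks $(C,c)$. $T$ is conflict-free if no $(A,a),(B,b)\in T$ with $(A,a)$ sufficiently attacking $(B,b)$; admissible if conflict-free and it weakening defends every element of $T$. For $C\subseteq\mathcal A$: $\mathcal{AE}(FAF,C)$ is the set of admissible $E$ with $E\subseteq C$; $\mathcal{PE}(FAF,C)$ (preferred extensions in $C$) is the set of maximal elements of $\mathcal{AE}(FAF,C)$ with respect to $\subseteq$. Path-equivalence on $\mathrm{Args}$: $A\sim B$ iff $A=B$ or there are chains of attacks from $A$ to $B$ and from $B$ to $A$. $SCC_{FAF}(A)$ is the fuzzy set with value $\mathcal A(B)$ at each $B\sim A$, $0$ elsewhere; $SCCS_{FAF}$ is the set of these. $outparents_{FAF}(S)$ is the fuzzy set of $(B,\mathcal A(B))$ with $B\notin\mathrm{Supp}(S)$ attacking some argument of $\mathrm{Supp}(S)$. For $T\subseteq\mathcal A$, $FAF\downarrow_T=\langle T,\rho|_{\mathrm{Supp}(T)\times\mathrm{Supp}(T)}\rangle$, and notions in $FAF\downarrow_T$ refer to its own fuzzy arguments and attacks. For $E\subseteq\mathcal A$, $S\in SCCS_{FAF}$: $L_{FAF}(S,E)(A)=\max_B\big((E\cap outparents_{FAF}(S))(B)*\rho_{BA}\big)$ for $A\in\mathrm{Supp}(S)$, $0$ elsewhere; $R_{FAF}(S,E)(A)=\min\{\mathcal A(A),1-L_{FAF}(S,E)(A)\}$ for $A\in\mathrm{Supp}(S)$, $0$ elsewhere; $D_{FAF}(S,E)$ is the union of fuzzy points $(A,a)\in R_{FAF}(S,E)$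 such that for every $(B,b)\in outparents_{FAF}(S)$ sufficiently attacking $(A,a)$ there is $(C,c)\in E$ weakening $(B,b)$ to some $(B,b')$ which tolerably attacks $(A,a)$. *)

(* Stdlib reals (R) for membership degrees; MathComp finType for the
   (finite) crisp set Args, needed for the max in L_FAF. *)
From Stdlib Require Import Reals Relations ClassicalEpsilon.
From mathcomp Require Import ssreflect ssrfun ssrbool eqtype fintype bigop.

Set Implicit Arguments.
Unset Strict Implicit.

Local Open Scope R_scope.

Section FAF.
Variable Args : finType.

Definition pif (P : Prop) (a b : R) : R :=
  if excluded_middle_informative P then a else b.

Definition fuzzy_set (S : Args -> R) : Prop := forall x, 0 <= S x <= 1.
Definition fsub (S S' : Args -> R) : Prop := forall x, S x <= S' x.
Definition fcap (S S' : Args -> R) : Args -> R := fun x => Rmin (S x) (S' x).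
Definition Supp (S : Args -> R) (x : Args) : Prop := 0 < S x.

Definition fpoint_in (S : Args -> R) (x : Args) (a : R) : Prop :=
  0 < a <= 1 /\ a <= S x.

Definition is_FAF (Af : Args -> R) (rho : Args -> Args -> R) : Prop :=
  fuzzy_set Af /\ forall x y, 0 <= rho x y <= 1.

Definition attacks (rho : Args -> Args -> R) (x y : Args) : Prop := 0 < rho x y.

Definition sufficient_att (rho : Args -> Args -> R) x a y b : Prop :=
  attacks rho x y /\ Rmin a (rho x y) + b > 1.
Definition tolerable_att (rho : Args -> Args -> R) x a y b : Prop :=
  attacks rho x y /\ Rmin a (rho x y) + b <= 1.

Definition weaken (rho : Args -> Args -> R) x a y b : R :=
  Rmin (1 - Rmin a (rho x y)) b.

Definition weak_defends (Af : Args -> R) (rho : Args -> Args -> R)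
  (T : Args -> R) (z : Args) (c : R) : Prop :=
  forall y b, fpoint_in Af y b -> sufficient_att rho y b z c ->
    exists x a, fpoint_in T x a /\
      tolerable_att rho y (weaken rho x a y b) z c.

Definition conflict_free (rho : Args -> Args -> R) (T : Args -> R) : Prop :=
  ~ exists x a y b, fpoint_in T x a /\ fpoint_in T y b /\
      sufficient_att rho x a y b.

Definition admissible (Af : Args -> R) (rho : Args -> Args -> R)
  (T : Args -> R) : Prop :=
  fuzzy_set T /\ fsub T Af /\ conflict_free rho T /\
  forall z c, fpoint_in T z c -> weak_defends Af rho T z c.

Definition AE (Af : Args -> R) (rho : Args -> Args -> R) (C E : Args -> R) : Prop :=
  admissible Af rho E /\ fsub E C.

Definition PE (Af : Args -> R) (rho : Args -> Args -> R) (C E : Args -> R) : Prop :=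
  AE Af rho C E /\ forall E', AE Af rho C E' -> fsub E E' -> fsub E' E.

Definition path_equiv (rho : Args -> Args -> R) (x y : Args) : Prop :=
  x = y \/ (clos_trans Args (attacks rho) x y /\ clos_trans Args (attacks rho) y x).

Definition SCC (Af : Args -> R) (rho : Args -> Args -> R) (x : Args) : Args -> R :=
  fun y => pif (path_equiv rho y x) (Af y) 0.

Definition is_SCC (Af : Args -> R) (rho : Args -> Args -> R) (S : Args -> R) : Prop :=
  exists x, S = SCC Af rho x.

Definition outparents (Af : Args -> R) (rho : Args -> Args -> R) (S : Args -> R) :
  Args -> R :=
  fun y => pif (~ Supp S y /\ exists x, Supp S x /\ attacks rho y x) (Af y) 0.

(* restriction FAF|_T = <T, rho restricted to Supp T x Supp T> *)
Definition restrict (rho : Args -> Args -> R) (T : Args -> R) : Args -> Args -> R :=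
  fun x y => pif (Supp T x /\ Supp T y) (rho x y) 0.

Definition L_FAF (Af : Args -> R) (rho : Args -> Args -> R) (S E : Args -> R) :
  Args -> R :=
  fun x => pif (Supp S x)
    (\big[Rmax/0]_(y : Args) Rmin (fcap E (outparents Af rho S) y) (rho y x)) 0.

Definition R_FAF (Af : Args -> R) (rho : Args -> Args -> R) (S E : Args -> R) :
  Args -> R :=
  fun x => pif (Supp S x) (Rmin (Af x) (1 - L_FAF Af rho S E x)) 0.

(* union of fuzzy points: pointwise supremum of the degrees
   (0 if there is no point at that argument) *)
Lemma sup01_bound (P : R -> Prop) :
  bound (fun a => a = 0 \/ (0 < a <= 1 /\ P a)).
Proof.
exists 1; intros a [->|[[_ H] _]]; [left; exact Rlt_0_1| exact H].
Qed.

Lemma sup01_ne (P : R -> Prop) : exists a, a = 0 \/ (0 < a <= 1 /\ P a).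
Proof. exists 0; left; reflexivity. Qed.

Definition sup01 (P : R -> Prop) : R :=
  proj1_sig (completeness _ (sup01_bound P) (sup01_ne P)).

Definition fuzzy_union (P : Args -> R -> Prop) : Args -> R :=
  fun x => sup01 (P x).

Definition D_FAF (Af : Args -> R) (rho : Args -> Args -> R) (S E : Args -> R) :
  Args -> R :=
  fuzzy_union (fun x a =>
    fpoint_in (R_FAF Af rho S E) x a /\
    forall y b, fpoint_in (outparents Af rho S) y b -> sufficient_att rho y b x a ->
      exists z c, fpoint_in E z c /\
        tolerable_att rho y (weaken rho z c y b) x a).

End FAF.

(* The attacks that [E] sends into [S] from outside are summed
   up by [L_FAF]; [R_FAF] lowers each argument of [S] to the degree that
   survives them, and [D_FAF] keeps the degrees at which [E] already answers
   every attacker from outside [S]. Since only finitely many arguments can weaken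
   an attacker, the supremum defining [D_FAF] is itself such a degree.
   If [E] is preferred, then [fcap E S] is admissible in the restricted framework
   and lies in [fcap D C]; any larger such [F] could be patched into [E] on [S],
   giving a larger admissible subset of [C].
   Conversely, the slices at the SCCs of the arguments of [E] make [E]
   conflict-free and self-defending. For maximality against an admissible
   [E' >= E], induct along the acyclic order of the SCCs: if [E'] agrees with [E]
   upstream of [S], it induces the same [R_FAF] on [S], so the maximality of
   [fcap E S] forces [E'] to agree with [E] on [S] too. *)

From Stdlib Require Import Reals Lra ClassicalEpsilon FunctionalExtensionality Relations.
From mathcomp Require Import ssreflect ssrfun ssrbool eqtype ssrnat seq fintype bigop finset.

Set Implicit Arguments.
Unset Strict Implicit.

Local Open Scope R_scope.

Ltac minmax_lra := unfold Rmin, Rmax in *;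
  repeat match goal with
  | |- context[Rle_dec ?a ?b] => destruct (Rle_dec a b)
  | H : context[Rle_dec ?a ?b] |- _ => destruct (Rle_dec a b)
  end; lra.

Lemma pif_true (P : Prop) a b : P -> pif P a b = a.
Proof. by rewrite /pif; case: excluded_middle_informative. Qed.

Lemma pif_false (P : Prop) a b : ~ P -> pif P a b = b.
Proof. by rewrite /pif; case: excluded_middle_informative. Qed.

Section BigMaxMin.
Variables (I : eqType) (F : I -> R).

Lemma bigmax_ge (s : seq I) j : j \in s -> F j <= \big[Rmax/0]_(i <- s) F i.
Proof.
elim: s => [//|a s IH]; rewrite inE big_cons => /orP [/eqP ->|/IH h].
  exact: Rmax_l.
exact: Rle_trans h (Rmax_r _ _).
Qed.

Lemma bigmax_ge0 (s : seq I) : 0 <= \big[Rmax/0]_(i <- s) F i.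
Proof.
elim: s => [|a s IH]; rewrite ?big_nil ?big_cons; first lra.
exact: Rle_trans IH (Rmax_r _ _).
Qed.

Lemma bigmax_le (s : seq I) u : 0 <= u -> (forall i, F i <= u) ->
  \big[Rmax/0]_(i <- s) F i <= u.
Proof. by move=> u0 Fu; elim/big_ind: _ => // *; apply: Rmax_lub. Qed.

Lemma bigmax_attained (s : seq I) :
  \big[Rmax/0]_(i <- s) F i = 0 \/ exists i, \big[Rmax/0]_(i <- s) F i = F i.
Proof.
elim/big_ind: _ => [|x y Kx Ky|i _]; first by left.
  by rewrite /Rmax; case: Rle_dec.
by right; exists i.
Qed.

Lemma bigmin_le (s : seq I) j : j \in s -> \big[Rmin/1]_(i <- s) F i <= F j.
Proof.
elim: s => [//|a s IH]; rewrite inE big_cons => /orP [/eqP ->|/IH h].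
  exact: Rmin_l.
exact: Rle_trans (Rmin_r _ _) h.
Qed.

Lemma bigmin_attained (s : seq I) :
  \big[Rmin/1]_(i <- s) F i = 1 \/ exists i, \big[Rmin/1]_(i <- s) F i = F i.
Proof.
elim/big_ind: _ => [|x y Kx Ky|i _]; first by left.
  by rewrite /Rmin; case: Rle_dec.
by right; exists i.
Qed.

End BigMaxMin.

Section Sup01.
Variable P : R -> Prop.

Lemma sup01_lub : is_lub (fun a => a = 0 \/ (0 < a <= 1 /\ P a)) (sup01 P).
Proof. by rewrite /sup01; case: completeness. Qed.

Lemma sup01_ge a : 0 < a <= 1 -> P a -> a <= sup01 P.
Proof. by move=> a01 Pa; apply: (proj1 sup01_lub); right. Qed.

Lemma sup01_ge0 : 0 <= sup01 P.
Proof. by apply: (proj1 sup01_lub); left. Qed.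

Lemma sup01_le u : 0 <= u -> (forall a, 0 < a <= 1 -> P a -> a <= u) -> sup01 P <= u.
Proof. by move=> u0 Pu; apply: (proj2 sup01_lub) => a [->|[]] //; apply: Pu. Qed.

Lemma sup01_approx eps : 0 < eps ->
  exists a, (a = 0 \/ (0 < a <= 1 /\ P a)) /\ sup01 P - eps < a.
Proof.
move=> eps0; apply: NNPP => none.
suff : sup01 P <= sup01 P - eps by lra.
apply: (proj2 sup01_lub) => a Pa; apply: Rnot_lt_le => lt_a.
by apply: none; exists a.
Qed.

End Sup01.

Lemma fpoint_in_sub (Args : finType) (T T' : Args -> R) x a :
  fsub T T' -> fpoint_in T x a -> fpoint_in T' x a.
Proof. by move=> TT' [a01 aT]; split=> //; exact: Rle_trans aT (TT' x). Qed.

Lemma fsub_fcap (Args : finType) (T A B : Args -> R) :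
  fsub T A -> fsub T B -> fsub T (fcap A B).
Proof. by move=> TA TB x; apply: Rmin_glb. Qed.

Definition counters (Args : finType) (rho : Args -> Args -> R) (T : Args -> R)
  (y : Args) (b : R) (x : Args) (a : R) : Prop :=
  exists z c, fpoint_in T z c /\ tolerable_att rho y (weaken rho z c y b) x a.

Section Attacks.
Variables (Args : finType) (rho : Args -> Args -> R).

Lemma sufficient_not_tolerable y b x a :
  sufficient_att rho y b x a -> ~ tolerable_att rho y b x a.
Proof. by move=> [_ ?] [_ ?]; lra. Qed.

Lemma weakener_sufficient z c y b x a : b <= 1 ->
  sufficient_att rho y b x a -> tolerable_att rho y (weaken rho z c y b) x a ->
  sufficient_att rho z c y b.
Proof.
rewrite /sufficient_att /tolerable_att /weaken /attacks => b1 [_ sa] [_ tol].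
by split; minmax_lra.
Qed.

Lemma tolerable_weaken_degree z c y b b' x a :
  sufficient_att rho y b' x a -> tolerable_att rho y (weaken rho z c y b') x a ->
  tolerable_att rho y (weaken rho z c y b) x a.
Proof.
rewrite /sufficient_att /tolerable_att /weaken => [[_ sa] [yx tol]].
by split=> //; minmax_lra.
Qed.

Lemma counters_sub T T' y b x a : fsub T T' ->
  counters rho T y b x a -> counters rho T' y b x a.
Proof.
move=> TT' [z [c [[c01 cT] tol]]]; exists z, c; split=> //.
by split=> //; apply: Rle_trans cT (TT' z).
Qed.

Lemma restrict_supp T x y : Supp T x -> Supp T y -> restrict rho T x y = rho x y.
Proof. by move=> Tx Ty; rewrite /restrict pif_true. Qed.

Lemma restrict_attacks T x y : attacks (restrict rho T) x y -> Supp T x /\ Supp T y.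
Proof.
rewrite /attacks /restrict; have [//|nT] := classic (Supp T x /\ Supp T y).
by rewrite pif_false //; lra.
Qed.

Lemma sufficient_restrict T y b x a : Supp T y -> Supp T x ->
  sufficient_att (restrict rho T) y b x a <-> sufficient_att rho y b x a.
Proof. by move=> Ty Tx; rewrite /sufficient_att /attacks restrict_supp. Qed.

Lemma counters_restrict T F y b x a : fsub F T -> Supp T y -> Supp T x ->
  counters (restrict rho T) F y b x a <-> counters rho F y b x a.
Proof.
move=> FT Ty Tx; split=> -[z [c [zc tol]]]; exists z, c; split=> //;
  have Tz : Supp T z by rewrite /Supp; have := FT z; case: zc => [[c0 _] cF]; lra.
  by move: tol; rewrite /tolerable_att /weaken /attacks !restrict_supp.
by rewrite /tolerable_att /weaken /attacks !restrict_supp.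
Qed.

Lemma path_equiv_trans_r u v w : clos_trans _ (attacks rho) u v ->
  path_equiv rho v w -> clos_trans _ (attacks rho) u w.
Proof. by move=> uv [<-|[vw _]] //; exact: t_trans uv vw. Qed.

Lemma path_equiv_trans_l u v w : path_equiv rho u v ->
  clos_trans _ (attacks rho) u w -> clos_trans _ (attacks rho) v w.
Proof. by move=> [<-|[_ vu]] uw //; exact: t_trans vu uw. Qed.

Lemma condensation_ind (P : Args -> Prop) :
  (forall x, (forall z, ~ path_equiv rho z x -> clos_trans _ (attacks rho) z x -> P z) ->
     P x) ->
  forall x, P x.
Proof.
move=> step.
pose ancestors x : {set Args} := [set u | if excluded_middle_informative
  (u = x \/ clos_trans _ (attacks rho) u x) then true else false].
have ancP u x : u \in ancestors x <-> u = x \/ clos_trans _ (attacks rho) u x.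
  by rewrite inE; case: excluded_middle_informative.
suff IH n x : (#|ancestors x| < n)%N -> P x by move=> x; exact: (IH _ x (ltnSn _)).
elim: n x => [//|n IH] x; rewrite ltnS => le_x; apply: step => z nzx zx; apply: IH.
apply: leq_trans le_x; apply: proper_card; apply/properP; split.
  apply/subsetP => u /ancP uz; apply/ancP; right.
  by case: uz => [->|uz] //; exact: t_trans uz zx.
exists x; first by apply/ancP; left.
by apply/negP => /ancP [xz|xz]; apply: nzx; [left | right].
Qed.

End Attacks.

Section Framework.
Variables (Args : finType) (Af : Args -> R) (rho : Args -> Args -> R).
Hypothesis HFAF : is_FAF Af rho.

Lemma Af_01 y : 0 <= Af y <= 1.
Proof. exact: (proj1 HFAF y). Qed.

Lemma rho_01 y z : 0 <= rho y z <= 1.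
Proof. exact: (proj2 HFAF y z). Qed.

(* [S] is [Af] restricted to a crisp set of arguments; nothing else about SCCs
   is needed before the maximality argument of the converse direction. *)
Section Slice.
Variable S : Args -> R.
Hypothesis S_crisp : forall y, S y = Af y \/ S y = 0.

Lemma S_Supp y : Supp S y -> S y = Af y.
Proof. by move=> Sy; case: (S_crisp y) => // e; rewrite /Supp e in Sy; lra. Qed.

Lemma S_nSupp y : ~ Supp S y -> S y = 0.
Proof.
by move=> nSy; case: (S_crisp y) => // e; rewrite /Supp e in nSy *; have := Af_01 y; lra.
Qed.

Lemma slice_on T y : fsub T Af -> Supp S y -> fcap T S y = T y.
Proof. by move=> TA Sy; rewrite /fcap S_Supp // Rmin_left. Qed.

Lemma slice_off T y : fuzzy_set T -> ~ Supp S y -> fcap T S y = 0.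
Proof. by move=> Tf nSy; rewrite /fcap S_nSupp // Rmin_right //; have := Tf y; lra. Qed.

Definition is_outparent y := ~ Supp S y /\ exists x, Supp S x /\ attacks rho y x.

Lemma outparents_on y : is_outparent y -> outparents Af rho S y = Af y.
Proof. by move=> oy; rewrite /outparents pif_true. Qed.

Lemma outparents_off y : ~ is_outparent y -> outparents Af rho S y = 0.
Proof. by move=> noy; rewrite /outparents pif_false. Qed.

Lemma fpoint_outparentsE y b :
  fpoint_in (outparents Af rho S) y b <-> is_outparent y /\ fpoint_in Af y b.
Proof.
have [oy|noy] := classic (is_outparent y).
  by rewrite /fpoint_in outparents_on //; tauto.
rewrite /fpoint_in outparents_off //; split=> [[[b0 _] b_le0]|[oy _]] //; lra.
Qed.

Lemma R_FAF_ext E E' : fuzzy_set E -> fuzzy_set E' ->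
  (forall z, is_outparent z -> E' z = E z) -> R_FAF Af rho S E' = R_FAF Af rho S E.
Proof.
move=> HE HE' agree; apply: functional_extensionality => y.
rewrite /R_FAF /L_FAF; do 4 f_equal; apply: eq_bigr => z _.
have [oz|noz] := classic (is_outparent z); first by rewrite /fcap outparents_on // agree.
by rewrite /fcap outparents_off //; have := HE z; have := HE' z; minmax_lra.
Qed.

Section Points.
Variable E : Args -> R.
Hypotheses (HE : fuzzy_set E) (HEA : fsub E Af).

Notation LSE := (L_FAF Af rho S E).
Notation RSE := (R_FAF Af rho S E).
Notation DSE := (D_FAF Af rho S E).

Lemma L_on y : Supp S y ->
  LSE y = \big[Rmax/0]_(z : Args) Rmin (fcap E (outparents Af rho S) z) (rho z y).
Proof. by move=> Sy; rewrite /L_FAF pif_true. Qed.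

Lemma L_off y : ~ Supp S y -> LSE y = 0.
Proof. by move=> nSy; rewrite /L_FAF pif_false. Qed.

Lemma L_ge0 y : 0 <= LSE y.
Proof.
have [Sy|nSy] := classic (Supp S y); last by rewrite L_off //; lra.
by rewrite L_on //; apply: bigmax_ge0.
Qed.

Lemma L_le1 y : LSE y <= 1.
Proof.
have [Sy|nSy] := classic (Supp S y); last by rewrite L_off //; lra.
by rewrite L_on //; apply: bigmax_le => [|z]; [lra | have := rho_01 z y; minmax_lra].
Qed.

Lemma outparent_le_L z y : Supp S y -> is_outparent z -> Rmin (E z) (rho z y) <= LSE y.
Proof.
move=> Sy oz; rewrite L_on //.
have -> : E z = fcap E (outparents Af rho S) z.
  by rewrite /fcap outparents_on // (Rmin_left _ _ (HEA z)).
exact: (bigmax_ge (fun z => Rmin (fcap E (outparents Af rho S) z) (rho z y))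
  (mem_index_enum z)).
Qed.

Lemma L_attained y : 0 < LSE y -> Supp S y /\
  exists z, is_outparent z /\ 0 < E z /\ Rmin (E z) (rho z y) = LSE y.
Proof.
move=> L0; have Sy : Supp S y by apply: NNPP => nSy; rewrite L_off // in L0; lra.
split=> //; move: L0; rewrite L_on //.
case: (bigmax_attained (fun z => Rmin (fcap E (outparents Af rho S) z) (rho z y))
  (index_enum Args)) => [->|[z ->]] L0; first lra.
have oz : is_outparent z.
  by apply: NNPP => noz; move: L0; rewrite /fcap outparents_off //; have := HE z; minmax_lra.
move: L0; rewrite /fcap outparents_on // (Rmin_left _ _ (HEA z)) => L0.
by exists z; split=> //; split=> //; move: L0; minmax_lra.
Qed.

Lemma R_on y : Supp S y -> RSE y = Rmin (Af y) (1 - LSE y).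
Proof. by move=> Sy; rewrite /R_FAF pif_true. Qed.

Lemma R_off y : ~ Supp S y -> RSE y = 0.
Proof. by move=> nSy; rewrite /R_FAF pif_false. Qed.

Lemma R_ge0 y : 0 <= RSE y.
Proof.
have [Sy|nSy] := classic (Supp S y); last by rewrite R_off //; lra.
by rewrite R_on //; have := Af_01 y; have := L_le1 y; minmax_lra.
Qed.

Lemma R_le_Af y : RSE y <= Af y.
Proof.
have [Sy|nSy] := classic (Supp S y); first by rewrite R_on //; apply: Rmin_l.
by rewrite R_off //; have := Af_01 y; lra.
Qed.

Lemma R_le1 y : RSE y <= 1.
Proof. by have := R_le_Af y; have := Af_01 y; lra. Qed.

Lemma R_le_1mL y : RSE y <= 1 - LSE y.
Proof.
have [Sy|nSy] := classic (Supp S y); first by rewrite R_on //; apply: Rmin_r.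
by rewrite R_off // L_off //; lra.
Qed.

Lemma R_Supp y : 0 < RSE y -> Supp S y.
Proof. by move=> R0; apply: NNPP => nSy; rewrite R_off // in R0; lra. Qed.

(* [L] collects every attack of [E] from outside [S], so such attacks are
   tolerable against the degrees allowed by [R]. *)
Lemma outside_not_sufficient z c y b : ~ Supp S z -> c <= E z -> Supp S y ->
  b <= RSE y -> ~ sufficient_att rho z c y b.
Proof.
move=> nSz cE Sy bR [zy sa].
have oz : is_outparent z by split=> //; exists y.
have := outparent_le_L Sy oz; have := R_le_1mL y; minmax_lra.
Qed.

Lemma slice_le_R : conflict_free rho E -> fsub (fcap E S) RSE.
Proof.
move=> cf y; have [Sy|nSy] := classic (Supp S y); last first.
  by rewrite slice_off // R_off //; lra.
rewrite slice_on // R_on //; apply: Rmin_glb => //.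
have [L0|L0] := Rle_dec (LSE y) 0; first by have := HE y; lra.
have [_ [z [oz [Ez zL]]]] := L_attained (Rnot_le_lt _ _ L0).
apply: Rnot_lt_le => Ey; apply: cf; exists z, (E z), y, (E y).
split; first by split; [have := HE z; lra | lra].
split; first by split; [have := HE y; have := L_le1 y; lra | lra].
by split; [rewrite /attacks; move: zL; minmax_lra | lra].
Qed.

Lemma admissible_slice : admissible Af rho E ->
  admissible RSE (restrict rho RSE) (fcap E S).
Proof.
move=> [_ [_ [cf def]]]; have sliceR := slice_le_R cf.
have sliceE : fsub (fcap E S) E by move=> y; apply: Rmin_l.
split.
  by move=> y; rewrite /fcap; have := HE y; case: (S_crisp y) => ->;
    have := Af_01 y; minmax_lra.
split=> //; split.
  move=> [p [a [q [b [pa [qb sa]]]]]]; have [Rp Rq] := restrict_attacks sa.1.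
  apply: cf; exists p, a, q, b.
  by split; [|split]; [exact: fpoint_in_sub pa | exact: fpoint_in_sub qb
    | exact/(sufficient_restrict rho _ _ Rp Rq)].
move=> x c xc y b yb sa; have [Ry Rx] := restrict_attacks sa.1.
move/(sufficient_restrict rho _ _ Ry Rx): sa => sa.
apply/(counters_restrict rho _ _ sliceR Ry Rx).
have yA : fpoint_in Af y b by apply: fpoint_in_sub yb; exact: R_le_Af.
have [z [c' [zc tol]]] := def x c (fpoint_in_sub sliceE xc) y b yA sa.
have zy := weakener_sufficient yb.1.2 sa tol.
have [Sz|nSz] := classic (Supp S z).
  by exists z, c'; split=> //; move: zc; rewrite /fpoint_in slice_on.
by case: (outside_not_sufficient nSz zc.2 (R_Supp Ry) yb.2 zy).
Qed.

Definition D_point x a : Prop :=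
  fpoint_in RSE x a /\
  forall y b, fpoint_in (outparents Af rho S) y b -> sufficient_att rho y b x a ->
    counters rho E y b x a.

Lemma D_ge x a : D_point x a -> a <= DSE x.
Proof. by move=> Dxa; apply: sup01_ge => //; case: Dxa => [[]]. Qed.

Lemma D_ge0 x : 0 <= DSE x.
Proof. exact: sup01_ge0. Qed.

Lemma D_le_R x : DSE x <= RSE x.
Proof. by apply: sup01_le => [|a _ [[_ aR] _]] //; exact: R_ge0. Qed.

(* Finitely many arguments can weaken a given attack, so failing to counter it
   is an open condition on the degree of the attacked argument. *)
Lemma uncountered_open y b x a :
  sufficient_att rho y b x a -> ~ counters rho E y b x a ->
  exists eps, 0 < eps /\ forall a', a - eps < a' ->
    sufficient_att rho y b x a' /\ ~ counters rho E y b x a'.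
Proof.
move=> [yx sa] uncountered; have a0 : 0 < a by have := rho_01 y x; minmax_lra.
pose t z := pif (0 < E z) (Rmin (weaken rho z (E z) y b) (rho y x)) 1.
pose M := \big[Rmin/1]_(z : Args) t z.
have Ma : M + a > 1.
  rewrite /M; case: (bigmin_attained t (index_enum Args)) => [->|[z ->]]; first lra.
  rewrite /t; have [Ez|Ez] := classic (0 < E z); last by rewrite pif_false //; lra.
  rewrite pif_true //; apply: Rnot_le_lt => tol; apply: uncountered.
  by exists z, (E z); split; [split; [have := HE z; lra | lra] | split].
have M_le z c : fpoint_in E z c -> M <= Rmin (weaken rho z c y b) (rho y x).
  move=> [c01 cE]; apply: Rle_trans (bigmin_le t (mem_index_enum z)) _.
  by rewrite /t pif_true /weaken; minmax_lra.
exists (Rmin (M + a - 1) (Rmin b (rho y x) + a - 1)); split; first by minmax_lra.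
move=> a' a'a; split; first by split=> //; minmax_lra.
by move=> [z [c [zc [_ tol]]]]; have := M_le z c zc; minmax_lra.
Qed.

Lemma D_point_of_le x a : 0 < a -> a <= DSE x -> D_point x a.
Proof.
move=> a0 aD; have aR := Rle_trans _ _ _ aD (D_le_R x).
split; first by split; [split; [lra | have := R_le1 x; lra] | lra].
move=> y b yb sa; apply: NNPP => uncountered.
have [eps [eps0 open]] := uncountered_open sa uncountered.
have [a1 [[a1_0|[_ Da1]] lt_a1]] := sup01_approx (D_point x) eps0;
  change (DSE x - eps < a1) in lt_a1.
  have [[_ sa0] _] := open a1 ltac:(lra).
  by have := yb.1.2; rewrite a1_0 in sa0; minmax_lra.
have [sa1 uncountered1] := open a1 ltac:(lra).
exact: uncountered1 (Da1.2 y b yb sa1).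
Qed.

Lemma counters_outside x f y b : 0 < f -> f <= DSE x -> Supp S x -> ~ Supp S y ->
  fpoint_in Af y b -> sufficient_att rho y b x f -> counters rho E y b x f.
Proof.
move=> f0 fD Sx nSy yb sa; apply: (D_point_of_le f0 fD).2 => //.
by apply/fpoint_outparentsE; split=> //; split=> //; exists x; split=> //; case: sa.
Qed.

Definition patch (F : Args -> R) (w : Args) : R := pif (Supp S w) (F w) (E w).

Lemma patch_on F w : Supp S w -> patch F w = F w.
Proof. by move=> Sw; rewrite /patch pif_true. Qed.

Lemma patch_off F w : ~ Supp S w -> patch F w = E w.
Proof. by move=> nSw; rewrite /patch pif_false. Qed.

Lemma patch_le F G : fsub F G -> fsub E G -> fsub (patch F) G.
Proof.
by move=> FG EG w; rewrite /patch /pif; case: excluded_middle_informative => ?;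
  [exact: FG | exact: EG].
Qed.

Lemma fpoint_in_patch F z c : fsub F RSE -> fpoint_in F z c -> fpoint_in (patch F) z c.
Proof.
move=> FR zc; have Sz : Supp S z by apply: R_Supp; have := FR z; case: zc => [[]]; lra.
by rewrite /fpoint_in patch_on.
Qed.

(* Inside [S] the outparents are accounted for by [L]: first let them weaken
   the attacker down to a degree allowed by [R], then defend in the restricted
   framework. *)
Lemma counters_inside F x f y b : fsub F RSE ->
  (forall x f, fpoint_in F x f -> weak_defends RSE (restrict rho RSE) F x f) ->
  fpoint_in F x f -> Supp S y -> fpoint_in Af y b -> sufficient_att rho y b x f ->
  counters rho (patch F) y b x f.
Proof.
move=> FR Fdef xf Sy yb sa.
have Rx : Supp RSE x by rewrite /Supp; have := FR x; case: xf => [[]]; lra.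
pose b' := Rmin (1 - LSE y) b.
have b'R : b' <= RSE y by rewrite R_on // /b'; have := yb.2; minmax_lra.
have [tol|sa'] := Rle_dec (Rmin b' (rho y x) + f) 1.
  have L0 : 0 < LSE y.
    apply: Rnot_le_lt => L0; apply: (sufficient_not_tolerable sa); split; first exact: sa.1.
    by have := L_ge0 y; have := yb.1.2; move: tol; rewrite /b'; minmax_lra.
  have [_ [z [[nSz _] [Ez zL]]]] := L_attained L0.
  exists z, (E z); split.
    by rewrite /fpoint_in patch_off //; have := HE z; lra.
  by rewrite /weaken zL; split; [exact: sa.1 | exact: tol].
have b'0 : 0 < b' by have := xf.1.2; move: sa'; minmax_lra.
have Ry : Supp RSE y by rewrite /Supp; lra.
have [z [c [zc tol]]] : counters rho F y b' x f.
  apply/(counters_restrict rho _ _ FR Ry Rx); apply: (Fdef x f xf y b').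
    by split; [split; [lra | have := yb.1.2; rewrite /b'; minmax_lra] | done].
  by apply/(sufficient_restrict rho _ _ Ry Rx); split; [exact: sa.1 | lra].
exists z, c; split; first exact: fpoint_in_patch.
exact: tolerable_weaken_degree (conj sa.1 (Rnot_le_lt _ _ sa')) tol.
Qed.

Lemma slice_sub_D T : fuzzy_set T -> fsub T Af -> fsub (fcap T S) RSE ->
  (forall w y b, Supp S w -> 0 < T w -> fpoint_in (outparents Af rho S) y b ->
     sufficient_att rho y b w (T w) -> counters rho E y b w (T w)) ->
  fsub (fcap T S) DSE.
Proof.
move=> Tf TA TR Tdef w; have [Sw|nSw] := classic (Supp S w); last first.
  by rewrite slice_off //; exact: D_ge0.
have := TR w; rewrite !slice_on // => TwR.
have [Tw0|Tw0] := Rle_dec (T w) 0; first by have := D_ge0 w; lra.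
apply: D_ge; split; last by move=> y b; apply: Tdef => //; lra.
by split; [split; [lra | have := Tf w; lra] | done].
Qed.

Section Patch.
Variable F : Args -> R.
Hypothesis HF_R : fsub F RSE.

Lemma F_le_Af : fsub F Af.
Proof. by move=> w; exact: Rle_trans (HF_R w) (R_le_Af w). Qed.

Lemma F_Supp_R z c : fpoint_in F z c -> Supp RSE z.
Proof. by move=> [[c0 _] cF]; rewrite /Supp; have := HF_R z; lra. Qed.

Lemma E_le_patch : fsub (fcap E S) F -> fsub E (patch F).
Proof.
move=> EF w; have [Sw|nSw] := classic (Supp S w); last by rewrite patch_off //; lra.
by rewrite patch_on // -(slice_on HEA Sw); exact: EF.
Qed.

Lemma patch_not_sufficient z c p a : conflict_free (restrict rho RSE) F ->
  fpoint_in (patch F) z c -> fpoint_in F p a -> ~ sufficient_att rho z c p a.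
Proof.
move=> Fcf zc pa sa; have Rp := F_Supp_R pa.
have [Sz|nSz] := classic (Supp S z).
  move: zc; rewrite /fpoint_in patch_on // => zc; have Rz := F_Supp_R zc.
  apply: Fcf; exists z, c, p, a; split=> //; split=> //.
  exact/(sufficient_restrict rho _ _ Rz Rp).
move: zc; rewrite /fpoint_in patch_off // => zc.
exact: outside_not_sufficient nSz zc.2 (R_Supp Rp) (Rle_trans _ _ _ pa.2 (HF_R p)) sa.
Qed.

Lemma patch_conflict_free : admissible Af rho E -> fsub (fcap E S) F ->
  conflict_free (restrict rho RSE) F -> conflict_free rho (patch F).
Proof.
move=> [_ [_ [Ecf Edef]]] EF Fcf [p [a [q [b [pa [qb sa]]]]]].
have [Sq|nSq] := classic (Supp S q).
  by apply: patch_not_sufficient Fcf pa _ sa; move: qb; rewrite /fpoint_in patch_on.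
move: qb; rewrite /fpoint_in patch_off // => qb.
have [Sp|nSp] := classic (Supp S p); last first.
  by apply: Ecf; exists p, a, q, b; move: pa; rewrite /fpoint_in patch_off.
move: pa; rewrite /fpoint_in patch_on // => pa; have pA := fpoint_in_sub F_le_Af pa.
have [z [c [zc tol]]] := Edef q b qb p a pA sa.
apply: patch_not_sufficient Fcf (fpoint_in_sub (E_le_patch EF) zc) pa _.
exact: weakener_sufficient pA.1.2 sa tol.
Qed.

Lemma patch_defends : admissible Af rho E -> fsub (fcap E S) F ->
  (forall x f, fpoint_in F x f -> weak_defends RSE (restrict rho RSE) F x f) ->
  fsub F DSE -> forall w e, fpoint_in (patch F) w e -> weak_defends Af rho (patch F) w e.
Proof.
move=> [_ [_ [_ Edef]]] EF Fdef FD w e we y b yb sa.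
have [Sw|nSw] := classic (Supp S w); last first.
  apply: counters_sub (E_le_patch EF) _; apply: (Edef w e) yb sa.
  by move: we; rewrite /fpoint_in patch_off.
move: we; rewrite /fpoint_in patch_on // => we.
have [Sy|nSy] := classic (Supp S y); first exact: counters_inside HF_R Fdef we Sy yb sa.
apply: counters_sub (E_le_patch EF) _.
exact: counters_outside we.1.1 (Rle_trans _ _ _ we.2 (FD w)) Sw nSy yb sa.
Qed.

Lemma patch_admissible : admissible Af rho E -> fsub (fcap E S) F ->
  admissible RSE (restrict rho RSE) F -> fsub F DSE -> admissible Af rho (patch F).
Proof.
move=> Eadm EF [Ff [_ [Fcf Fdef]]] FD.
split; first by move=> w; rewrite /patch /pif; case: excluded_middle_informative => ?;
  [exact: Ff | exact: HE].
split; first exact: patch_le F_le_Af HEA.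
by split; [exact: patch_conflict_free | exact: patch_defends].
Qed.

End Patch.

Lemma PE_slice C : fuzzy_set C -> PE Af rho C E ->
  PE RSE (restrict rho RSE) (fcap DSE C) (fcap E S).
Proof.
move=> Cf [[Eadm EC] Emax]; have [_ [_ [Ecf Edef]]] := Eadm.
have sliceE : fsub (fcap E S) E by move=> w; apply: Rmin_l.
split.
  split; first exact: admissible_slice.
  apply: fsub_fcap; last by move=> w; exact: Rle_trans (sliceE w) (EC w).
  apply: slice_sub_D => // [|w y b _ Ew yb sa]; first exact: slice_le_R.
  apply: (Edef w (E w)) sa; first by split; [split; [lra | have := HE w; lra] | lra].
  by case/fpoint_outparentsE: yb.
move=> F [Fadm FDC] EF; have FR : fsub F RSE by case: Fadm => [_ []].
have FD : fsub F DSE by move=> w; exact: Rle_trans (FDC w) (Rmin_l _ _).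
have patchC : fsub (patch F) C.
  by apply: patch_le EC => w; exact: Rle_trans (FDC w) (Rmin_r _ _).
have le := Emax (patch F) (conj (patch_admissible FR Eadm EF Fadm FD) patchC)
  (E_le_patch EF).
move=> w; have [Sw|nSw] := classic (Supp S w).
  by rewrite slice_on //; have := le w; rewrite patch_on.
rewrite slice_off //; apply: Rnot_lt_le => Fw; apply: nSw.
exact: R_Supp (Rlt_le_trans _ _ _ Fw (FR w)).
Qed.

Lemma slice_conflict_free p a q b : admissible RSE (restrict rho RSE) (fcap E S) ->
  fpoint_in E p a -> fpoint_in E q b -> Supp S q -> ~ sufficient_att rho p a q b.
Proof.
move=> [_ [sliceR [cf _]]] pa qb Sq.
apply: (patch_not_sufficient sliceR cf) (fpoint_in_sub (E_le_patch _) pa) _.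
  by move=> w; apply: Rle_refl.
by rewrite /fpoint_in slice_on.
Qed.

Lemma slice_counters x c y b : admissible RSE (restrict rho RSE) (fcap E S) ->
  fsub (fcap E S) DSE -> fpoint_in E x c -> Supp S x -> fpoint_in Af y b ->
  sufficient_att rho y b x c -> counters rho E y b x c.
Proof.
move=> [_ [sliceR [_ def]]] sliceD xc Sx yb sa.
have [Sy|nSy] := classic (Supp S y).
  apply: counters_sub (patch_le (fun w => Rmin_l _ _) (fun w => Rle_refl _)) _.
  by apply: counters_inside sliceR def _ Sy yb sa; rewrite /fpoint_in slice_on.
apply: counters_outside nSy yb sa => //; first by case: xc => [[]].
by have := sliceD x; rewrite slice_on //; case: xc => _; lra.
Qed.

End Points.
End Slice.
Section SCC.
Variable x0 : Args.
Notation S := (SCC Af rho x0).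

Lemma SCC_crisp y : S y = Af y \/ S y = 0.
Proof.
rewrite /SCC; have [e|ne] := classic (path_equiv rho y x0).
  by left; rewrite pif_true.
by right; rewrite pif_false.
Qed.

Lemma Supp_SCC y : Supp S y <-> path_equiv rho y x0 /\ 0 < Af y.
Proof.
rewrite /Supp /SCC; have [e|ne] := classic (path_equiv rho y x0).
  by rewrite pif_true //; tauto.
by rewrite pif_false //; split=> [|[]] //; lra.
Qed.

Lemma outparent_SCC_upstream z : is_outparent S z -> clos_trans _ (attacks rho) z x0.
Proof.
move=> [_ [s [/Supp_SCC [sx0 _] zs]]].
exact: path_equiv_trans_r (t_step _ _ _ _ zs) sx0.
Qed.

Lemma attacker_of_outparent_SCC z y : is_outparent S y -> 0 < Af y ->
  attacks rho z y -> ~ Supp S z.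
Proof.
move=> [nSy [s [/Supp_SCC [sx0 _] ys]]] Ay zy /Supp_SCC [zx0 _]; apply: nSy.
apply/Supp_SCC; split=> //; right; split.
  exact: path_equiv_trans_r (t_step _ _ _ _ ys) sx0.
exact: path_equiv_trans_l zx0 (t_step _ _ _ _ zy).
Qed.

(* Upstream of the SCC, [E'] agrees with [E]; so it has the same outparent
   attacks on the SCC, hence the same [R_FAF], and its slice competes with that
   of [E]. *)
Lemma le_at_SCC_root E E' C : fuzzy_set E -> fsub E Af ->
  PE (R_FAF Af rho S E) (restrict rho (R_FAF Af rho S E))
     (fcap (D_FAF Af rho S E) C) (fcap E S) ->
  AE Af rho C E' -> fsub E E' ->
  (forall z, ~ path_equiv rho z x0 -> clos_trans _ (attacks rho) z x0 -> E' z <= E z) ->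
  E' x0 <= E x0.
Proof.
move=> HE HEA [_ slice_max] [E'adm E'C] EE' up.
have [HE' [HE'A [E'cf E'def]]] := E'adm.
have upS z : ~ Supp S z -> clos_trans _ (attacks rho) z x0 -> E' z <= E z.
  move=> nSz zx; have [e|ne] := classic (path_equiv rho z x0); last exact: up.
  have Az : Af z <= 0 by apply: Rnot_lt_le => Az; apply: nSz; exact/Supp_SCC.
  by have := HE z; have := HE'A z; lra.
have RE' : R_FAF Af rho S E' = R_FAF Af rho S E.
  apply: R_FAF_ext => // z oz.
  by have := upS z oz.1 (outparent_SCC_upstream oz); have := EE' z; lra.
have E'D : fsub (fcap E' S) (D_FAF Af rho S E).
  apply: (slice_sub_D SCC_crisp) => //; first by rewrite -RE'; exact: (slice_le_R SCC_crisp).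
  move=> w y b Sw E'w /(fpoint_outparentsE S) [oy yb] sa.
  have E'w1 : E' w <= 1 by have := HE' w; lra.
  have [z [c [zc tol]]] := E'def w (E' w) (conj (conj E'w E'w1) (Rle_refl _)) y b yb sa.
  have [zy _] := weakener_sufficient yb.1.2 sa tol.
  have nSz := attacker_of_outparent_SCC oy (Rlt_le_trans _ _ _ yb.1.1 yb.2) zy.
  have zx := t_trans _ _ _ _ _ (t_step _ _ _ _ zy) (outparent_SCC_upstream oy).
  exists z, c; split=> //; case: zc => c01 cE'; split=> //.
  exact: Rle_trans cE' (upS z nSz zx).
have E'slice : admissible (R_FAF Af rho S E) (restrict rho (R_FAF Af rho S E)) (fcap E' S).
  by rewrite -RE'; exact: (admissible_slice SCC_crisp).
have E'C' : fsub (fcap E' S) C by move=> w; exact: Rle_trans (Rmin_l _ _) (E'C w).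
have le := slice_max (fcap E' S) (conj E'slice (fsub_fcap E'D E'C')).
have [Ax0|Ax0] := Rle_dec (Af x0) 0; first by have := HE x0; have := HE'A x0; lra.
have Sx0 : Supp S x0 by apply/Supp_SCC; split; [left | lra].
have := le _ x0; rewrite !(slice_on SCC_crisp) //; apply.
by move=> w; rewrite /fcap; have := EE' w; minmax_lra.
Qed.

End SCC.

Lemma PE_of_SCC_slices E C : fuzzy_set E -> fsub E Af -> fuzzy_set C ->
  (forall x, PE (R_FAF Af rho (SCC Af rho x) E)
     (restrict rho (R_FAF Af rho (SCC Af rho x) E))
     (fcap (D_FAF Af rho (SCC Af rho x) E) C) (fcap E (SCC Af rho x))) ->
  PE Af rho C E.
Proof.
move=> HE HEA HC slice.
have Supp_own x c : fpoint_in E x c -> Supp (SCC Af rho x) x.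
  by move=> [[c0 _] cE]; apply/Supp_SCC; split; [left | have := HEA x; lra].
have EC : fsub E C.
  move=> w; have [Ew|Ew] := Rle_dec (E w) 0; first by have := HC w; lra.
  have [[_ sub] _] := slice w.
  have Sw : Supp (SCC Af rho w) w.
    by apply: (Supp_own w (E w)); split; [split; [lra | have := HE w; lra] | lra].
  rewrite -(slice_on (SCC_crisp w) HEA Sw); exact: Rle_trans (sub w) (Rmin_r _ _).
have Eadm : admissible Af rho E.
  split=> //; split=> //; split.
    move=> [p [a [q [b [pa [qb sa]]]]]]; have [[adm _] _] := slice q.
    exact: (slice_conflict_free (SCC_crisp q) HEA adm pa qb (Supp_own _ _ qb) sa).
  move=> x c xc y b yb sa; have [[adm sub] _] := slice x.
  apply: (slice_counters (SCC_crisp x) HE HEA adm _ xc (Supp_own _ _ xc) yb sa).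
  by move=> w; exact: Rle_trans (sub w) (Rmin_l _ _).
split; first by split.
move=> E' E'AE EE' x; elim/(@condensation_ind _ rho): x => x up.
exact: le_at_SCC_root HE HEA (slice x) E'AE EE' up.
Qed.

End Framework.

Theorem mainTheorem6 (Args : finType) (Af : Args -> R) (rho : Args -> Args -> R)
  (HFAF : is_FAF Af rho) (E : Args -> R) (HE : fuzzy_set E) (HEA : fsub E Af) :
  forall C : Args -> R, fuzzy_set C -> fsub C Af ->
    (PE Af rho C E <->
     forall S : Args -> R, is_SCC Af rho S ->
       PE (R_FAF Af rho S E) (restrict rho (R_FAF Af rho S E))
          (fcap (D_FAF Af rho S E) C) (fcap E S)).
Proof.
move=> C HC _; split.
  by move=> pe S [x ->]; exact: (PE_slice HFAF (SCC_crisp Af rho x) HE HEA HC pe).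
by move=> slices; apply: (PE_of_SCC_slices HFAF HE HEA HC) => x; apply: slices; exists x.
Qed.
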